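(* For positive integers $\ell,m$, let $A(\ell,m)$ be the $(\ell+m)\times(\ell+m)$ coloring matrix with entries $a_{ij}=0$ if $i,j>\ell$ and $a_{ij}=1$ otherwise. Then for $1\le i\le\ell$, $$\ell^2F_{A(\ell,m)}^{(i)}(x)^3-2\ell F_{A(\ell,m)}^{(i)}(x)^2+((\ell-m)x+1)F_{A(\ell,m)}^{(i)}(x)-x=0,$$ and for $\ell+1\le i\le\ell+m$, $$mF_{A(\ell,m)}^{(i)}(x)^3+(\ell-m)xF_{A(\ell,m)}^{(i)}(x)^2-xF_{A(\ell,m)}^{(i)}(x)+x^2=0.$$
   Context: A plane tree is an unlabeled rooted tree in which the children of every vertex are linearly ordered. A coloring matrix is a square matrix $A=(a_{ij})$ with entries in $\{0,1\}$. An $A$-coloring of a plane tree assigns to each vertex a color (an index of a row of $A$) such that whenever a vertex of color $j$ is a child of a vertex of color $i$, $a_{ij}=1$. Let $t_A^{(i)}(n)$ be the number of pairs (plane tree with $n$ vertices, $A$-coloring of it) with root color $i$, and $F_A^{(i)}(x)=\sum_{n\ge1}t_A^{(i)}(n)x^n$ (formal power series). *)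

From mathcomp Require Import all_boot all_order all_algebra.
From Stdlib Require List.
From Stdlib Require Import ClassicalEpsilon.
Set Implicit Arguments. Unset Strict Implicit. Unset Printing Implicit Defensive.
Import GRing.Theory Num.Theory.

(* A coloring matrix of size k: a k x k 0/1 matrix, entries encoded as bool
   (true = 1, false = 0).  Colors are the row indices 'I_k (0-based). *)

(* A plane tree whose vertices carry colors: a node has a color and an
   ordered list of children.  Such an object is exactly a pair
   (plane tree, coloring of its vertices). *)
Inductive ctree (k : nat) : Type :=
  CNode : 'I_k -> list (ctree k) -> ctree k.

Definition croot k (T : ctree k) : 'I_k := let: CNode c _ := T in c.

Fixpoint csize k (T : ctree k) : nat :=
  let: CNode _ ts := T in (sumn (map (@csize k) ts)).+1.

Fixpoint cvalid k (A : 'M[bool]_k) (T : ctree k) : bool :=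
  let: CNode c ts := T in
  all (fun U => A c (croot U) && cvalid A U) ts.

Definition is_tcount k (A : 'M[bool]_k) (i : 'I_k) (n c : nat) : Prop :=
  exists s : list (ctree k),
    List.NoDup s /\
    (forall T, List.In T s <-> (csize T = n /\ croot T = i /\ cvalid A T)) /\
    List.length s = c.

(* t_A^{(i)}(n) (the set is finite, so the count is well defined) *)
Definition tA k (A : 'M[bool]_k) (i : 'I_k) (n : nat) : nat :=
  epsilon (inhabits 0%N) (fun c => is_tcount A i n c).

Definition fps := nat -> int.
Local Open Scope ring_scope.
Definition sadd (f g : fps) : fps := fun n => f n + g n.
Definition sopp (f : fps) : fps := fun n => - f n.
Definition sscale (c : int) (f : fps) : fps := fun n => c * f n.
Definition smul (f g : fps) : fps :=
  fun n => \sum_(j < n.+1) f j * g (n - j)%N.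
Definition sconst (c : int) : fps := fun n => if n == 0%N then c else 0.
Definition sX : fps := fun n => (n == 1%N)%:R.

Definition FA k (A : 'M[bool]_k) (i : 'I_k) : fps :=
  fun n => if n == 0%N then 0 else (tA A i n)%:Z.

(* A(l,m): a_{ij} = 0 iff i,j > l (1-based), i.e. i,j >= l (0-based) *)
Definition Alm (l m : nat) : 'M[bool]_(l + m) :=
  \matrix_(i, j) ~~ ((l <= i)%N && (l <= j)%N).

(* A plane tree with root color c is the root above an ordered forest of
   subtrees whose root colors d satisfy a_cd = 1, and a nonempty forest is a
   tree followed by a forest.  Writing F_c for the tree series and Phi_p for
   the series of forests with root colors in p, this gives F_c = x Phi_(a_c)
   and Phi_p = 1 + (sum_(d in p) F_d) Phi_p, hence
   F_c (1 - sum_(a_cd = 1) F_d) = x.  For A(l,m), F_i only depends on whether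
   i <= l; with P and Q the two values, the system reads P (1 - l P - m Q) = x
   and Q (1 - l P) = x, and eliminating Q, resp. P, gives the two cubics.
   All identities are checked modulo x^(N+1) in Z[x], by explicit enumeration
   of the forests of size at most N. *)

From mathcomp Require Import all_boot all_order all_algebra.
From Stdlib Require List Permutation FinFun.
From Stdlib Require Import ClassicalEpsilon.
From mathcomp Require Import zify ring.
Import GRing.Theory.
Set Implicit Arguments. Unset Strict Implicit. Unset Printing Implicit Defensive.

Lemma In_mem (T : eqType) (x : T) (s : seq T) : List.In x s <-> x \in s.
Proof.
elim: s => [|y s IH] //=; rewrite in_cons; split.
- by case=> [->|/IH ->]; rewrite ?eqxx ?orbT.
- by case/orP=> [/eqP ->|/IH]; [left|right].
Qed.

Lemma uniq_NoDup (T : eqType) (s : seq T) : uniq s -> List.NoDup s.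
Proof.
elim: s => [|x s IH] /=; first by constructor.
by case/andP=> /negP nx us; constructor; [move/In_mem|exact: IH].
Qed.

Lemma NoDup_flat_map (X Y : Type) (g : X -> list Y) (l : list X) :
  List.NoDup l -> (forall x, List.In x l -> List.NoDup (g x)) ->
  (forall x y z, List.In x l -> List.In y l -> List.In z (g x) -> List.In z (g y) ->
     x = y) ->
  List.NoDup (List.flat_map g l).
Proof.
elim: l => [|a l IH] /=; first by constructor.
move=> /List.NoDup_cons_iff [al ndl] ndg disj; apply: List.NoDup_app.
- by apply: ndg; left.
- by apply: IH ndl _ _ => [x lx|x y z lx ly]; [apply: ndg|apply: disj]; right.
- move=> z za /List.in_flat_map [y [ly zy]].
  by apply: al; rewrite (disj a y z) //; [left|right].
Qed.

Lemma NoDup_length_eq (X : Type) (s t : list X) :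
  List.NoDup s -> List.NoDup t -> (forall x, List.In x s <-> List.In x t) ->
  List.length s = List.length t.
Proof.
by move=> nds ndt st; apply/Permutation.Permutation_length/Permutation.NoDup_Permutation.
Qed.

Lemma length_flat_map_sum (X Y : Type) (g : X -> list Y) (l : list X) :
  List.length (List.flat_map g l) = (\sum_(x <- l) List.length (g x))%N.
Proof.
by elim: l => [|a l IH] /=; rewrite ?big_nil ?big_cons ?List.length_app ?IH.
Qed.

Lemma sum_const_length (X : Type) (s : list X) (c : nat) :
  (\sum_(x <- s) c)%N = (List.length s * c)%N.
Proof. by elim: s => [|x s IH]; rewrite ?big_nil ?big_cons ?IH. Qed.

Section ColoredForests.
Variables (k : nat) (A : 'M[bool]_k).

Definition fsize (ts : list (ctree k)) : nat := sumn (map (@csize k) ts).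

Definition fvalid (p : pred 'I_k) (ts : list (ctree k)) : bool :=
  all (fun U => p (croot U) && cvalid A U) ts.

(* [f] is fuel: the enumeration is complete as soon as [n <= f]. *)
Fixpoint forests (f n : nat) (p : pred 'I_k) {struct f} : list (list (ctree k)) :=
  match n, f with
  | 0, _ => [:: [::]]
  | _.+1, 0 => [::]
  | n'.+1, f'.+1 =>
    List.flat_map (fun j =>
      List.flat_map (fun d =>
        List.flat_map (fun ch => List.map (cons (CNode d ch)) (forests f' (n' - j) p))
          (forests f' j (A d)))
        [seq d <- index_enum 'I_k | p d])
      (iota 0 n)
  end.

Lemma fsize_eq0 ts : fsize ts = 0%N -> ts = [::].
Proof. by case: ts => // [[c ch] ts]. Qed.

Lemma forests_sound f n p ts :
  List.In ts (forests f n p) -> fsize ts = n /\ fvalid p ts.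
Proof.
elim: f n p ts => [|f IH] [|n] p ts //; try by case=> [<-|[]].
move=> /List.in_flat_map [j [/In_mem]]; rewrite mem_iota => /andP [_ jn].
move=> /List.in_flat_map [d [/In_mem]]; rewrite mem_filter => /andP [pd _].
move=> /List.in_flat_map [ch [/IH [sch vch] /List.in_map_iff [rest [<- /IH [sr vr]]]]].
split; last by rewrite /fvalid /= pd; apply/andP.
by rewrite /fsize /= -/(fsize ch) -/(fsize rest) sch sr; lia.
Qed.

Lemma forests_complete f n p ts :
  (n <= f)%N -> fsize ts = n -> fvalid p ts -> List.In ts (forests f n p).
Proof.
elim: f n p ts => [|f IH] [|n] p ts // nf; try by move/fsize_eq0 ->; left.
case: ts => [//|[d ch] rest]; rewrite /fsize /= -/(fsize ch) -/(fsize rest).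
move=> [sz] /andP [/andP [pd vch] vr].
apply/(List.in_flat_map _ (iota 0 n.+1)); exists (fsize ch); split.
  by apply/In_mem; rewrite mem_iota; lia.
apply/List.in_flat_map; exists d; split.
  by apply/In_mem; rewrite mem_filter pd mem_index_enum.
apply/List.in_flat_map; exists ch; split; first by apply: IH => //; lia.
by apply/List.in_map_iff; exists rest; split => //; apply: IH => //; lia.
Qed.

Lemma NoDup_forests f n p : List.NoDup (forests f n p).
Proof.
elim: f n p => [|f IH] [|n] p; do ?by repeat constructor.
have headE (d d' : 'I_k) ch ch' r r' :
  CNode d ch :: r = CNode d' ch' :: r' -> [/\ d = d', ch = ch' & r = r'] by case.
apply: (@NoDup_flat_map _ _ _ (iota 0 n.+1)).
- exact/uniq_NoDup/iota_uniq.
- move=> j _; apply: NoDup_flat_map.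
  + exact/uniq_NoDup/filter_uniq/index_enum_uniq.
  + move=> d _; apply: NoDup_flat_map => //.
      by move=> ch _; apply: FinFun.Injective_map_NoDup => // r r' [].
    move=> ch ch' z _ _ /List.in_map_iff [r [<- _]] /List.in_map_iff [r' [/headE]].
    by case.
  + move=> d d' z _ _ /List.in_flat_map [ch [_ /List.in_map_iff [r [<- _]]]].
    by move=> /List.in_flat_map [ch' [_ /List.in_map_iff [r' [/headE]]]]; case.
- move=> j j' z _ _ /List.in_flat_map [d [_ /List.in_flat_map [ch [/forests_sound [<- _]]]]].
  move=> /List.in_map_iff [r [<- _]].
  move=> /List.in_flat_map [d' [_ /List.in_flat_map [ch' [/forests_sound [<- _]]]]].
  by move=> /List.in_map_iff [r' [/headE]]; case=> _ ->.
Qed.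

Definition nforests n p : nat := List.length (forests n n p).

Lemma length_forests f n p : (n <= f)%N -> List.length (forests f n p) = nforests n p.
Proof.
move=> nf; apply: NoDup_length_eq; try exact: NoDup_forests.
by move=> ts; split => /forests_sound [sz v]; apply: forests_complete.
Qed.

Lemma eq_nforests n p p' : p =1 p' -> nforests n p = nforests n p'.
Proof.
move=> pp'; apply: NoDup_length_eq; try exact: NoDup_forests.
have vE ts : fvalid p ts = fvalid p' ts by apply: eq_all => U; rewrite pp'.
move=> ts; split => /forests_sound [sz v]; apply: forests_complete => //.
  by rewrite -vE.
by rewrite vE.
Qed.

Lemma nforestsS n p :
  nforests n.+1 p =
  (\sum_(j < n.+1) \sum_(d | p d) nforests j (A d) * nforests (n - j) p)%N.
Proof.
rewrite /nforests (length_flat_map_sum _ (iota 0 n.+1)) -/(index_iota 0 n.+1) big_mkord.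
apply: eq_bigr => j _; rewrite length_flat_map_sum big_filter.
apply: eq_bigr => d _; rewrite length_flat_map_sum.
under eq_bigr => ch _ do rewrite List.length_map length_forests ?leq_subr //.
by rewrite sum_const_length (length_forests (A d) (ltn_ord j : j <= n)%N).
Qed.

Lemma is_tcount_unique c n x y : is_tcount A c n x -> is_tcount A c n y -> x = y.
Proof.
move=> [s [nds [ins <-]]] [t [ndt [int <-]]].
by apply: NoDup_length_eq => // T; rewrite ins int.
Qed.

Lemma tA_is_tcount c n x : is_tcount A c n x -> tA A c n = x.
Proof.
move=> cx; have ctA : is_tcount A c n (tA A c n) by apply: epsilon_spec; exists x.
exact: is_tcount_unique ctA cx.
Qed.

Lemma tAS c n : tA A c n.+1 = nforests n (A c).
Proof.
rewrite /nforests -(List.length_map (CNode c)); apply: tA_is_tcount.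
exists (List.map (CNode c) (forests n n (A c))); split; last split => //.
  by apply: FinFun.Injective_map_NoDup; [move=> ? ? []|exact: NoDup_forests].
move=> [c' ch]; split.
  by move=> /List.in_map_iff [ch' [[<- <-] /forests_sound [<- v]]].
move=> [[sz] [/= <- v]]; apply/List.in_map_iff; exists ch; split => //.
exact: forests_complete.
Qed.

End ColoredForests.

Local Open Scope ring_scope.

Lemma dvdp_XnP (R : idomainType) n (p : {poly R}) :
  reflect (forall i, (i < n)%N -> p`_i = 0) ('X^n %| p).
Proof.
apply: (iffP (Pdiv.IdomainMonic.dvdpP (monicXn R n) p)) => [[q ->] i lt_in|p_low].
  by rewrite coefMXn lt_in.
exists (drop_poly n p); rewrite -[LHS](poly_take_drop n) [take_poly _ _](_ : _ = 0) ?add0r //.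
by apply/polyP => i; rewrite coef_take_poly coef0; case: ifP => // /p_low.
Qed.

Section Truncation.
Variable N : nat.

Definition trunc_series (F : fps) : {poly int} := \poly_(i < N.+1) F i.

Definition approx (F : fps) (p : {poly int}) : Prop :=
  forall i, (i <= N)%N -> F i = p`_i.

Lemma approx_trunc F : approx F (trunc_series F).
Proof. by move=> i iN; rewrite coef_poly ltnS iN. Qed.

Lemma approx_add F G p q : approx F p -> approx G q -> approx (sadd F G) (p + q).
Proof. by move=> Fp Gq i iN; rewrite coefD /sadd Fp ?Gq. Qed.

Lemma approx_opp F p : approx F p -> approx (sopp F) (- p).
Proof. by move=> Fp i iN; rewrite coefN /sopp Fp. Qed.

Lemma approx_scale c F p : approx F p -> approx (sscale c F) (c%:P * p).
Proof. by move=> Fp i iN; rewrite coefCM /sscale Fp. Qed.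

Lemma approx_const c : approx (sconst c) c%:P.
Proof. by move=> i iN; rewrite coefC. Qed.

Lemma approx_X : approx sX 'X.
Proof. by move=> i iN; rewrite coefX. Qed.

Lemma approx_mul F G p q : approx F p -> approx G q -> approx (smul F G) (p * q).
Proof.
move=> Fp Gq i iN; rewrite coefM /smul; apply: eq_bigr => j _.
by rewrite Fp ?Gq // (leq_trans _ iN) // ?leq_subr // -ltnS.
Qed.

Lemma approx_coef_eq0 F p q : approx F p -> 'X^(N.+1) %| q -> p = q -> F N = 0.
Proof. by move=> Fp /dvdp_XnP q_low pq; rewrite Fp // pq q_low. Qed.

End Truncation.

Create HintDb approx.
#[export] Hint Resolve approx_add approx_opp approx_scale approx_const
  approx_X approx_mul : approx.

Section GeneratingFunctions.
Variables (k : nat) (A : 'M[bool]_k) (N : nat).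

Definition forest_poly (p : pred 'I_k) : {poly int} :=
  \poly_(i < N.+1) (nforests A i p)%:Z.

Lemma dvdX_FA_forest c :
  'X^(N.+1) %| trunc_series N (FA A c) - 'X * forest_poly (A c).
Proof.
apply/dvdp_XnP => i; rewrite ltnS => iN.
rewrite coefB coefXM !coef_poly /FA; case: i iN => [|i] iN /=; first by rewrite subrr.
by rewrite !ltnS iN (ltnW iN) tAS subrr.
Qed.

Lemma dvdX_forest_rec p :
  'X^(N.+1) %| forest_poly p - 1 - (\sum_(d | p d) trunc_series N (FA A d)) * forest_poly p.
Proof.
set S := \sum_(d | p d) _; apply/dvdp_XnP => i; rewrite ltnS => iN.
have S0 : S`_0 = 0 by rewrite coef_sum big1 // => d _; rewrite coef_poly.
rewrite !coefB coef1 coefM coef_poly ltnS iN.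
case: i iN => [|n] nN; first by rewrite big_ord1 S0 mul0r.
rewrite big_ord_recl S0 mul0r add0r subr0 nforestsS -natz natr_sum; apply/eqP.
rewrite subr_eq0; apply/eqP/eq_bigr => j _; rewrite natr_sum coef_sum mulr_suml.
apply: eq_bigr => d _; rewrite natrM !natz !coef_poly /FA /= tAS subSS.
have jn := ltn_ord j; rewrite !ifT // ?/bump; lia.
Qed.

Lemma dvdX_FA_rec c :
  'X^(N.+1) %| trunc_series N (FA A c) * (1 - \sum_(d | A c d) trunc_series N (FA A d)) - 'X.
Proof.
set T := trunc_series N _; set S := \sum_(d | _) _; set Phi := forest_poly (A c).
have -> : T * (1 - S) - 'X = (1 - S) * (T - 'X * Phi) + 'X * (Phi - 1 - S * Phi) by ring.
by rewrite dvdp_add ?dvdp_mull ?dvdX_FA_forest ?dvdX_forest_rec.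
Qed.

End GeneratingFunctions.

Lemma eq_FA_row k (A : 'M[bool]_k) c c' : A c =1 A c' -> FA A c =1 FA A c'.
Proof. by move=> cc' [|n] //; rewrite /FA /= !tAS (eq_nforests A n cc'). Qed.

Section ColoringMatrixAlm.
Variables (l m N : nat) (a b : 'I_(l + m)).
Hypotheses (al : (a < l)%N) (lb : (l <= b)%N).

Let T c := trunc_series N (FA (Alm l m) c).

Lemma trunc_FA_low (c : 'I_(l + m)) : (c < l)%N -> T c = T a.
Proof.
move=> cl; apply/eq_poly => i _; apply: eq_FA_row => e.
by rewrite !mxE (leqNgt l c) (leqNgt l a) cl al.
Qed.

Lemma trunc_FA_high (c : 'I_(l + m)) : (l <= c)%N -> T c = T b.
Proof. by move=> lc; apply/eq_poly => i _; apply: eq_FA_row => e; rewrite !mxE lc lb. Qed.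

Lemma sum_FA_low_row :
  \sum_(d | Alm l m a d) T d = l%:R * T a + m%:R * T b.
Proof.
rewrite (eq_bigl predT) => [|d]; last by rewrite mxE leqNgt al.
rewrite big_split_ord /= (eq_bigr (fun=> T a)) => [|i _]; last first.
  by rewrite trunc_FA_low //= ltn_ord.
rewrite [X in _ + X](eq_bigr (fun=> T b)) => [|j _]; last first.
  by rewrite trunc_FA_high //= leq_addr.
by rewrite !sumr_const !card_ord !mulr_natl.
Qed.

Lemma sum_FA_high_row : \sum_(d | Alm l m b d) T d = l%:R * T a.
Proof.
rewrite big_mkcond big_split_ord /= [X in _ + X]big1 => [|j _]; last first.
  by rewrite mxE lb /= leq_addr.
rewrite addr0 (eq_bigr (fun=> T a)) => [|i _]; last first.
  by rewrite mxE lb /= leqNgt ltn_ord /= trunc_FA_low //= ltn_ord.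
by rewrite sumr_const card_ord mulr_natl.
Qed.

Lemma Alm_system :
  'X^(N.+1) %| T a * (1 - l%:R * T a - m%:R * T b) - 'X /\
  'X^(N.+1) %| T b * (1 - l%:R * T a) - 'X.
Proof.
have := dvdX_FA_rec (Alm l m) N a; have := dvdX_FA_rec (Alm l m) N b.
rewrite -/(T a) -/(T b) sum_FA_low_row sum_FA_high_row opprD addrA.
by split.
Qed.

Lemma Alm_low_cubic :
  'X^(N.+1) %| l%:R ^+ 2 * T a ^+ 3 - 2 * l%:R * T a ^+ 2 +
               ((l%:R - m%:R) * 'X + 1) * T a - 'X.
Proof.
have [sysP sysQ] := Alm_system.
set R1 := (X in _ %| X) in sysP; set R2 := (X in _ %| X) in sysQ.
have -> : l%:R ^+ 2 * T a ^+ 3 - 2 * l%:R * T a ^+ 2 + ((l%:R - m%:R) * 'X + 1) * T a - 'X =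
          (1 - l%:R * T a) * R1 + m%:R * T a * R2 by rewrite /R1 /R2; ring.
by rewrite dvdp_add ?dvdp_mull.
Qed.

Lemma Alm_high_cubic :
  'X^(N.+1) %| m%:R * T b ^+ 3 + (l%:R - m%:R) * 'X * T b ^+ 2 - 'X * T b + 'X ^+ 2.
Proof.
have [sysP sysQ] := Alm_system.
set R1 := (X in _ %| X) in sysP; set R2 := (X in _ %| X) in sysQ.
have -> : m%:R * T b ^+ 3 + (l%:R - m%:R) * 'X * T b ^+ 2 - 'X * T b + 'X ^+ 2 =
          - (l%:R * T b ^+ 2) * R1 + (l%:R * T a * T b + m%:R * T b ^+ 2 - 'X) * R2.
  by rewrite /R1 /R2; ring.
by rewrite dvdp_add ?dvdp_mull.
Qed.

End ColoringMatrixAlm.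

Theorem theorem34 (l m : nat) (hl : (0 < l)%N) (hm : (0 < m)%N) :
  (forall i : 'I_(l + m), (i < l)%N ->
     let F := FA (Alm l m) i in
     forall n : nat,
       sadd (sadd (sscale ((l ^ 2)%N%:Z) (smul F (smul F F)))
                  (sopp (sscale ((2 * l)%N%:Z) (smul F F))))
            (sadd (smul (sadd (sscale (l%:Z - m%:Z) sX) (sconst 1)) F)
                  (sopp sX)) n = 0)
  /\
  (forall i : 'I_(l + m), (l <= i)%N ->
     let F := FA (Alm l m) i in
     forall n : nat,
       sadd (sadd (sscale m%:Z (smul F (smul F F)))
                  (sscale (l%:Z - m%:Z) (smul sX (smul F F))))
            (sadd (sopp (smul sX F)) (smul sX sX)) n = 0).
Proof.
have lm_gt0 : (0 < l + m)%N by rewrite addn_gt0 hl.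
have l_lt_lm : (l < l + m)%N by rewrite -{1}(addn0 l) ltn_add2l.
split => [a al F n | b lb F n]; rewrite {}/F.
- have FP := @approx_trunc n (FA (Alm l m) a).
  have cubicP := Alm_low_cubic n al (leqnn l : (l <= Ordinal l_lt_lm)%N).
  by eapply approx_coef_eq0; [eauto 30 with approx | exact: cubicP | ring].
- have FQ := @approx_trunc n (FA (Alm l m) b).
  have cubicQ := Alm_high_cubic n (hl : (Ordinal lm_gt0 < l)%N) lb.
  by eapply approx_coef_eq0; [eauto 30 with approx | exact: cubicQ | ring].
Qed.
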